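(* Let $\mathbf{k}$ be a field whose characteristic is either $0$ or greater than $d$, let $A = \mathbf{k}^{d}$ with standard basis of orthogonal idempotents $e_1,\dots,e_d$, let $M$ be a finite-dimensional $\mathbf{k}$-vector space and let $\phi : A \to \mathrm{End}_{\mathbf{k}}(M)$ be a $\mathbf{k}$-linear map. Put $\alpha_i = \phi(e_i)$ and $T_\phi = x_1 \otimes \alpha_1 + \dots + x_d \otimes \alpha_d \in \mathbf{k}\langle x_1,\dots,x_d\rangle \otimes_{\mathbf{k}} \mathrm{End}_{\mathbf{k}}(M)$. Then $\phi$ is a (unital) $\mathbf{k}$-algebra homomorphism if and only if \[ \chi_d(T_\phi) := \sum_{\sigma \in S_d} (T_\phi - x_{\sigma(1)})(T_\phi - x_{\sigma(2)})\cdots (T_\phi - x_{\sigma(d)}) = 0 \] in $\mathbf{k}\langle x_1,\dots,x_d\rangle \otimes_{\mathbf{k}} \mathrm{End}_{\mathbf{k}}(M)$.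
   Context: Here $\mathbf{k}\langle x_1,\dots,x_d\rangle$ is the free associative algebra (tensor algebra $\mathrm{T}(A^\vee)$) on the dual basis $x_1,\dots,x_d$ of $A^\vee$ to $e_1,\dots,e_d$; in the tensor product $\mathbf{k}\langle x_1,\dots,x_d\rangle \otimes_{\mathbf{k}} \mathrm{End}_{\mathbf{k}}(M)$ the $x_i$ commute with elements of $\mathrm{End}_{\mathbf{k}}(M)$, and $x_{\sigma(j)}$ stands for $x_{\sigma(j)} \otimes \mathrm{id}_M$. The element $\chi_d = \sum_{\sigma\in S_d}(t - x_{\sigma(1)})\cdots(t - x_{\sigma(d)}) \in \mathbf{k}\langle x_1,\dots,x_d,t\rangle$ is the (unnormalized) symmetrized lift to the free algebra of the characteristic polynomial $\prod_{i=1}^d (t - x_i)$ of left multiplication on $A$, and $\chi_d(T_\phi)$ denotes substituting $t = T_\phi$. *)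

From HB Require Import structures.
From mathcomp Require Import all_boot all_order all_algebra.
From mathcomp Require Import fingroup perm.
Set Implicit Arguments. Unset Strict Implicit. Unset Printing Implicit Defensive.
Import GRing.Theory.
Local Open Scope ring_scope.

(* Model of  k<x_1,...,x_d> (x)_k End_k(M)  with M = k^n, End_k(M) = 'M[k]_n.
   Since k<x> has the k-basis of words in x_1..x_d, this tensor product is
   the direct sum over words w of copies of End(M).  An element is given as a
   formal finite sum  sum_t  (word t.1) (x) (matrix t.2), encoded as a list;
   its coefficient at a word w is the sum of matrices attached to w; it is zero
   iff all its coefficients vanish.  Multiplication is
   (w (x) A)(v (x) B) = wv (x) AB  (the x_i commute with End(M)). *)
Section NCTensor.
Variables (k : fieldType) (d n : nat).

Definition ncm := seq (seq 'I_d * 'M[k]_n).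

Definition nc_coef (p : ncm) (w : seq 'I_d) : 'M[k]_n :=
  \sum_(t <- p | t.1 == w) t.2.

Definition nc_eq0 (p : ncm) : Prop := forall w, nc_coef p w = 0.

Definition nc_add (p q : ncm) : ncm := p ++ q.
Definition nc_sum (ps : seq ncm) : ncm := flatten ps.
Definition nc_opp (p : ncm) : ncm := [seq (t.1, - t.2) | t <- p].
Definition nc_sub (p q : ncm) : ncm := nc_add p (nc_opp q).
Definition nc_mul (p q : ncm) : ncm :=
  [seq (t.1 ++ u.1, t.2 *m u.2) | t <- p, u <- q].
Definition nc_one : ncm := [:: ([::], 1%:M)].
Definition nc_x (i : 'I_d) : ncm := [:: ([:: i], 1%:M)].
Definition nc_prod (ps : seq ncm) : ncm := foldr nc_mul nc_one ps.

Definition T_of (alpha : 'I_d -> 'M[k]_n) : ncm :=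
  [seq ([:: i], alpha i) | i <- enum 'I_d].

Definition chi_T (alpha : 'I_d -> 'M[k]_n) : ncm :=
  nc_sum [seq nc_prod [seq nc_sub (T_of alpha) (nc_x (s j)) | j <- enum 'I_d]
         | s : 'S_d <- enum [set: 'S_d]].

End NCTensor.

Definition std_e (k : fieldType) (d : nat) (i : 'I_d) : {ffun 'I_d -> k^o} :=
  [ffun j => (i == j)%:R].

From HB Require Import structures.
From mathcomp Require Import all_boot all_order all_algebra.
From mathcomp Require Import fingroup perm.
Set Implicit Arguments. Unset Strict Implicit. Unset Printing Implicit Defensive.
Import GRing.Theory.
Local Open Scope ring_scope.

(* The coefficient of a word [w] of length [d] in [chi_d(T)] is
   [\sum_s \prod_j (alpha_(w_j) - [s j = w_j])].  If the [alpha_i] are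
   orthogonal idempotents summing to 1, multiplying such a product by
   [1 = \sum_a alpha_a] kills it, since the factor with [s j = a] annihilates
   [alpha_a].  Conversely, the vanishing of all these coefficients polarizes to
   [\sum_s \prod_j \sum_c kappa_(j,c) (alpha_c - [s j = c]) = 0] for every
   scalar matrix [kappa].  Taking [kappa_(j,c) = t_c] for [d] distinct nodes
   [t_c] (they exist since the characteristic is 0 or exceeds [d]) shows that
   [Y = \sum_c t_c alpha_c] satisfies [d! \prod_c (Y - t_c) = 0], so the
   Lagrange polynomials of the nodes evaluated at [Y] form a complete set of
   orthogonal idempotents [E_c]; changing the last row of [kappa] to the
   indicator of [b] then gives [E_c alpha_b = [c = b] E_c], whence
   [alpha_b = E_b]. *)

Definition complete_orthogonal_idempotents (R : pzRingType) (d : nat)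
    (e : 'I_d -> R) :=
  (forall a b, e a * e b = if a == b then e a else 0) /\ \sum_a e a = 1.

(* The coefficient of [x_c] in [T - x_i]. *)
Definition chi_factor (R : pzRingType) (d : nat) (alpha : 'I_d -> R)
    (i c : 'I_d) : R :=
  alpha c - (i == c)%:R.

Section NCCoef.
Variables (k : fieldType) (d n : nat).
Local Notation ncm := (ncm k d n).

Lemma nc_coef_nil w : nc_coef ([::] : ncm) w = 0.
Proof. by rewrite /nc_coef big_nil. Qed.

Lemma nc_coef_cat (p q : ncm) w : nc_coef (p ++ q) w = nc_coef p w + nc_coef q w.
Proof. by rewrite /nc_coef big_cat. Qed.

Lemma nc_coef_sum (ps : seq ncm) w :
  nc_coef (nc_sum ps) w = \sum_(p <- ps) nc_coef p w.
Proof.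
elim: ps => [|p ps IH]; first by rewrite big_nil nc_coef_nil.
by rewrite big_cons /= nc_coef_cat IH.
Qed.

Lemma nc_coef_opp (p : ncm) w : nc_coef (nc_opp p) w = - nc_coef p w.
Proof. by rewrite /nc_coef /nc_opp big_map sumrN. Qed.

Lemma nc_coef_one w : nc_coef (nc_one k d n) w = (w == [::])%:R.
Proof. by rewrite /nc_coef big_cons big_nil addr0 eq_sym; case: (_ == _). Qed.

Definition nc_deg1 (p : ncm) := all (fun t => size t.1 == 1%N) p.

Lemma nc_coef_mul_deg1 (p q : ncm) w : nc_deg1 p ->
  nc_coef (nc_mul p q) w =
    if w is a :: w' then nc_coef p [:: a] *m nc_coef q w' else 0.
Proof.
elim: p => [|t p IH] /=; first by case: w => *; rewrite /nc_mul /= !nc_coef_nil ?mul0mx.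
case/andP=> /eqP t1 /IH{}IH.
have -> : nc_mul (t :: p) q = [seq (t.1 ++ u.1, t.2 *m u.2) | u <- q] ++ nc_mul p q.
  by [].
rewrite nc_coef_cat IH; case: t t1 => [[|i []] A] // _.
case: w {IH} => [|a w]; rewrite /nc_coef big_map.
  by rewrite big1 ?addr0.
rewrite big_cons /= (eq_bigl (fun u => (i == a) && (u.1 == w))) => [|u]; last first.
  by rewrite eqseq_cons.
rewrite !eqseq_cons eqxx andbT; case: (i == a) => /=.
  by rewrite mulmxDl -mulmx_sumr.
by rewrite big1 ?add0r.
Qed.

Lemma nc_coef_prod_deg1 (X : Type) (l : seq X) (F : X -> ncm)
    (g : X -> 'I_d -> 'M[k]_n) :
    (forall x, nc_deg1 (F x)) -> (forall x c, nc_coef (F x) [:: c] = g x c) ->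
  forall w, nc_coef (nc_prod (map F l)) w =
    if size w == size l then \prod_(p <- zip l w) g p.1 p.2 else 0.
Proof.
move=> F1 Fg; elim: l => [|x l IH] [|a w] //=; rewrite ?nc_coef_one ?big_nil //.
  by rewrite nc_coef_mul_deg1.
by rewrite nc_coef_mul_deg1 // Fg IH eqSS; case: ifP; rewrite ?big_cons ?mulmx0.
Qed.

Lemma nc_deg1_T_sub_x (alpha : 'I_d -> 'M[k]_n) i :
  nc_deg1 (nc_sub (T_of alpha) (nc_x k n i)).
Proof.
by rewrite /nc_deg1 /nc_sub /nc_add all_cat all_map; apply/andP; split=> //; apply/allP.
Qed.

Lemma nc_coef_T_sub_x (alpha : 'I_d -> 'M[k]_n) i c :
  nc_coef (nc_sub (T_of alpha) (nc_x k n i)) [:: c] = chi_factor alpha i c.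
Proof.
rewrite nc_coef_cat nc_coef_opp /chi_factor; congr (_ - _).
  rewrite /nc_coef /T_of big_map (eq_bigl (pred1 c)) => [|j]; last first.
    by rewrite /= eqseq_cons andbT.
  by rewrite -big_filter filter_pred1_uniq ?enum_uniq ?mem_enum // big_seq1.
by rewrite /nc_coef big_cons big_nil addr0 /= eqseq_cons andbT; case: (i == c).
Qed.

Lemma nc_coef_chi_T (alpha : 'I_d -> 'M[k]_n) w :
  nc_coef (chi_T alpha) w = if size w == d then
    \sum_(s : 'S_d) \prod_(p <- zip (enum 'I_d) w) chi_factor alpha (s p.1) p.2
  else 0.
Proof.
rewrite nc_coef_sum big_map big_enum_cond /= (eq_bigl xpredT) => [|s]; last first.
  by rewrite inE.
under eq_bigr => s _.
  rewrite (@nc_coef_prod_deg1 _ _ _ (fun j => chi_factor alpha (s j))); last first.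
  - by move=> j c; apply: nc_coef_T_sub_x.
  - by move=> j; apply: nc_deg1_T_sub_x.
  rewrite size_enum_ord; over.
by case: eqP => _ //; rewrite big1.
Qed.

End NCCoef.

Lemma prod_mulr_eigen (k : comNzRingType) (R : algType k) (X : Type) (r : seq X)
    (F : X -> R) (c : X -> k) v :
    (forall x, F x * v = c x *: v) ->
  (\prod_(x <- r) F x) * v = (\prod_(x <- r) c x) *: v.
Proof.
move=> Fv; elim: r => [|x r IH]; first by rewrite !big_nil mul1r scale1r.
by rewrite !big_cons -mulrA IH -scalerAr Fv scalerA mulrC.
Qed.

Section Idempotents.
Variables (k : fieldType) (R : algType k) (d : nat) (e : 'I_d -> R).
Hypothesis e_idem : complete_orthogonal_idempotents e.

Lemma mul_chi_factor_idem i c a :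
  chi_factor e i c * e a = ((c == a)%:R - (i == c)%:R) *: e a.
Proof.
have [e_orth _] := e_idem.
rewrite /chi_factor mulrBl e_orth mulr_natl scalerBl !scaler_nat.
by case: eqP => [->|]; rewrite ?mulr1n ?mulr0n ?sub0r.
Qed.

Lemma prod_chi_factor_eq0 (X : eqType) (r : seq X) (i c : X -> 'I_d) :
    (forall a, has (fun x => i x == a) r) ->
  \prod_(x <- r) chi_factor e (i x) (c x) = 0.
Proof.
move=> cover; have [_ e_sum] := e_idem.
rewrite -[LHS]mulr1 -[X in _ * X]e_sum mulr_sumr big1 // => a _.
rewrite (prod_mulr_eigen _ (fun x => mul_chi_factor_idem (i x) (c x) a)).
have /hasP[x x_r /eqP ixa] := cover a.
by rewrite (big_rem x x_r) /= ixa eq_sym subrr mul0r scale0r.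
Qed.
End Idempotents.

Lemma chi_T_idempotents_eq0 (k : fieldType) (d n : nat) (alpha : 'I_d -> 'M[k]_n.+1) :
  complete_orthogonal_idempotents alpha -> nc_eq0 (chi_T alpha).
Proof.
move=> idem w; rewrite nc_coef_chi_T; case: eqP => // size_w.
apply: big1 => s _; apply: (prod_chi_factor_eq0 idem) => a.
rewrite (eq_has (a2 := (fun j => s j == a) \o fst)) // -has_map.
rewrite [map _ _]unzip1_zip ?size_enum_ord ?size_w //.
by apply/hasP; exists (s^-1 a)%g; rewrite ?mem_enum ?permKV.
Qed.

Lemma horner_algZ (k : comNzRingType) (R : algType k) (Y : R) (a : k) p :
  horner_alg Y (a *: p) = a *: horner_alg Y p.
Proof. by rewrite -mul_polyC rmorphM /= horner_algC mulr_algl. Qed.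

Section Lagrange.
Variables (k : fieldType) (d : nat) (t : 'I_d -> k).
Hypothesis t_inj : injective t.

Definition node_poly : {poly k} := \prod_(i < d) ('X - (t i)%:P).

Definition lagrange_cofactor a : {poly k} :=
  \prod_(i < d | i != a) ('X - (t i)%:P).

Definition lagrange_basis a : {poly k} :=
  (lagrange_cofactor a).[t a]^-1 *: lagrange_cofactor a.

Lemma node_poly_perm (s : 'S_d) :
  \prod_(j < d) ('X - (t (s j))%:P) = node_poly.
Proof. by rewrite /node_poly [RHS](reindex_inj (@perm_inj _ s)). Qed.

Lemma lagrange_cofactorM a : lagrange_cofactor a * ('X - (t a)%:P) = node_poly.
Proof. by rewrite /node_poly (bigD1 a) //= mulrC. Qed.

Lemma horner_lagrange_cofactor_neq0 a : (lagrange_cofactor a).[t a] != 0.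
Proof.
rewrite horner_prod; apply/prodf_neq0 => i ia.
by rewrite !hornerE subr_eq0; apply: contra ia => /eqP/t_inj->.
Qed.

Lemma lagrange_cofactorE a :
  lagrange_cofactor a = (lagrange_cofactor a).[t a] *: lagrange_basis a.
Proof.
by rewrite scalerA mulfV ?scale1r ?horner_lagrange_cofactor_neq0.
Qed.

Lemma root_lagrange_cofactor a b : a != b -> root (lagrange_cofactor a) (t b).
Proof.
move=> ab; rewrite rootE horner_prod (bigD1 b) 1?eq_sym //=.
by rewrite hornerD hornerN hornerX hornerC subrr mul0r.
Qed.

Lemma horner_lagrange_basis a b : (lagrange_basis a).[t b] = (a == b)%:R.
Proof.
rewrite hornerZ; case: (a =P b) => [<-|/eqP ab].
  by rewrite mulVf ?horner_lagrange_cofactor_neq0.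
by rewrite (eqP (root_lagrange_cofactor ab)) mulr0.
Qed.

Section Evaluation.
Variables (R : algType k) (Y : R).
Hypothesis node_poly_Y : horner_alg Y node_poly = 0.

Lemma horner_alg_eq_on_nodes p q :
  (forall i, p.[t i] = q.[t i]) -> horner_alg Y p = horner_alg Y q.
Proof.
move=> pq; apply/eqP; rewrite -subr_eq0 -rmorphB; apply/eqP.
have nodes_roots : all (root (p - q)) [seq t i | i <- enum 'I_d].
  by apply/allP => _ /mapP[i _ ->]; rewrite rootE !hornerE pq subrr.
have nodes_uniq : uniq_roots [seq t i | i <- enum 'I_d].
  by rewrite uniq_rootsE (map_inj_uniq t_inj) enum_uniq.
have [r ->] := uniq_roots_prod_XsubC nodes_roots nodes_uniq.
by rewrite big_map big_enum /= rmorphM /= node_poly_Y mulr0.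
Qed.

Lemma lagrange_idempotents :
  complete_orthogonal_idempotents (fun a => horner_alg Y (lagrange_basis a)).
Proof.
split=> [a c|].
  rewrite -rmorphM; case: (a =P c) => [<-|/eqP ac].
    apply: horner_alg_eq_on_nodes => b.
    by rewrite hornerM horner_lagrange_basis -natrM mulnb andbb.
  rewrite -(rmorph0 (horner_alg Y)); apply: horner_alg_eq_on_nodes => b.
  rewrite hornerM !horner_lagrange_basis horner0 -natrM mulnb.
  by case: (a =P b) => // <-; rewrite eq_sym (negPf ac).
rewrite -rmorph_sum -(rmorph1 (horner_alg Y)); apply: horner_alg_eq_on_nodes => b.
rewrite horner_sum hornerC (bigD1 b) //= big1 => [|a ab].
  by rewrite horner_lagrange_basis eqxx addr0.
by rewrite horner_lagrange_basis (negPf ab).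
Qed.

Lemma lagrange_mul_cofactor c a :
  horner_alg Y (lagrange_basis c) * horner_alg Y (lagrange_cofactor a)
    = if a == c then (lagrange_cofactor a).[t a] *: horner_alg Y (lagrange_basis c)
      else 0.
Proof.
have [E_orth _] := lagrange_idempotents.
have -> : horner_alg Y (lagrange_cofactor a)
    = (lagrange_cofactor a).[t a] *: horner_alg Y (lagrange_basis a).
  by rewrite [in LHS]lagrange_cofactorE; apply: horner_algZ.
rewrite -scalerAr E_orth eq_sym.
by case: (a =P c) => [->|_]; rewrite ?scaler0.
Qed.

End Evaluation.
End Lagrange.

Lemma card_perm_fix (d : nat) (j : 'I_d) : #|[set s : 'S_d | s j == j]| = d.-1`!.
Proof.
rewrite -[d in RHS]card_ord -(cardsC1 j) -card_perm; apply: eq_card => s.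
rewrite inE; apply/eqP/subsetP => [sj x | on_s]; last first.
  by apply/eqP/contraT => /on_s; rewrite !inE eqxx.
by rewrite !inE; apply: contra => /eqP->; rewrite sj.
Qed.

Lemma card_perm_at (d : nat) (j a : 'I_d) : #|[set s : 'S_d | s j == a]| = d.-1`!.
Proof.
rewrite -(card_perm_fix j) -(card_imset _ (mulIg (tperm j a))).
apply: eq_card => s; rewrite inE; apply/imsetP/eqP => [[u] | sj].
  by rewrite inE => /eqP uja ->; rewrite permM uja tpermR.
exists (s * tperm j a)%g; first by rewrite inE permM sj tpermL.
by rewrite -mulgA tperm2 mulg1.
Qed.

Lemma sum_perm_at (V : nmodType) (d : nat) (j a : 'I_d) (x : V) :
  \sum_(s : 'S_d | s j == a) x = x *+ d.-1`!.
Proof.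
by rewrite sumr_const -(card_perm_at j a); congr (_ *+ _); apply: eq_card => s; rewrite inE.
Qed.

Section Converse.
Variables (k : fieldType) (R : algType k) (d' : nat).
Local Notation d := d'.+1.
Variables (alpha : 'I_d -> R) (t : 'I_d -> k).
Hypotheses (t_inj : injective t) (fact_neq0 : d`!%:R != 0 :> k).
Hypothesis chi_sum_eq0 : forall f : 'I_d -> 'I_d,
  \sum_(s : 'S_d) \prod_(j < d) chi_factor alpha (s j) (f j) = 0.

Lemma chi_sum_polarized (kappa : 'I_d -> 'I_d -> k) :
  \sum_(s : 'S_d) \prod_(j < d) \sum_c kappa j c *: chi_factor alpha (s j) c = 0.
Proof.
under eq_bigr => s _ do rewrite bigA_distr_bigA.
rewrite exchange_big big1 //= => f _.
under eq_bigr => s _ do rewrite scaler_prod.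
by rewrite -scaler_sumr chi_sum_eq0 scaler0.
Qed.

Let Y := \sum_c t c *: alpha c.
Local Notation E a := (horner_alg Y (lagrange_basis t a)).

Lemma chi_factor_nodes i :
  \sum_c t c *: chi_factor alpha i c = horner_alg Y ('X - (t i)%:P).
Proof.
have nodes_at_i : \sum_c t c *: (i == c)%:R = (t i)%:A :> R.
  rewrite (bigD1 i) //= big1 => [|c ic]; first by rewrite eqxx addr0.
  by rewrite eq_sym (negPf ic) scaler0.
rewrite rmorphB /= horner_algX horner_algC -nodes_at_i -sumrB.
by apply: eq_bigr => c _; rewrite scalerBr.
Qed.

Lemma node_poly_Y : horner_alg Y (node_poly t) = 0.
Proof.
have := chi_sum_polarized (fun _ c => t c).
under eq_bigr => s _.
  under eq_bigr => j _ do rewrite chi_factor_nodes.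
  rewrite -rmorph_prod node_poly_perm; over.
rewrite sumr_const card_Sn -scaler_nat => /eqP.
by rewrite scaler_eq0 (negPf fact_neq0) => /eqP.
Qed.

Lemma lagrange_cofactor_last (s : 'S_d) :
  \prod_(i < d') ('X - (t (s (widen_ord (leqnSn d') i)))%:P)
    = lagrange_cofactor t (s ord_max).
Proof.
apply: (@mulIf _ ('X - (t (s ord_max))%:P)); first by rewrite polyXsubC_eq0.
by rewrite lagrange_cofactorM -(node_poly_perm t s) [RHS]big_ord_recr.
Qed.

(* Every row of [kappa] but the last gives a factor [Y - t_(s j)]; the factor
   that is not a polynomial in [Y] has to come last, the product being ordered. *)
Lemma cofactor_chi_sum b :
  \sum_(s : 'S_d) horner_alg Y (lagrange_cofactor t (s ord_max))
                   * chi_factor alpha (s ord_max) b = 0.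
Proof.
pose kappa (j x : 'I_d) := if j == ord_max then (x == b)%:R else t x.
have last_factor (s : 'S_d) :
    \sum_x kappa ord_max x *: chi_factor alpha (s ord_max) x
      = chi_factor alpha (s ord_max) b.
  rewrite /kappa eqxx (bigD1 b) //= eqxx scale1r big1 ?addr0 // => x xb.
  by rewrite (negPf xb) scale0r.
have first_factor (s : 'S_d) (i : 'I_d') :
    \sum_x kappa (widen_ord (leqnSn d') i) x
             *: chi_factor alpha (s (widen_ord (leqnSn d') i)) x
      = horner_alg Y ('X - (t (s (widen_ord (leqnSn d') i)))%:P).
  have not_last : (widen_ord (leqnSn d') i == ord_max) = false.
    by apply/negbTE; rewrite -val_eqE /= neq_ltn ltn_ord.
  by rewrite /kappa; under eq_bigr do rewrite not_last; apply: chi_factor_nodes.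
rewrite -[RHS](chi_sum_polarized kappa); apply: eq_bigr => s _.
rewrite big_ord_recr /= last_factor (eq_bigr _ (fun i _ => first_factor s i)).
by rewrite -rmorph_prod lagrange_cofactor_last.
Qed.

Lemma lagrange_mul_alpha c b : E c * alpha b = if c == b then E c else 0.
Proof.
have fact_pred_neq0 : d'`!%:R != 0 :> k.
  by apply: contraNneq fact_neq0; rewrite factS natrM => ->; rewrite mulr0.
have := congr1 (fun x => E c * x) (cofactor_chi_sum b).
rewrite /= mulr0 mulr_sumr (eq_bigr (fun s : 'S_d =>
  if s ord_max == c then (lagrange_cofactor t c).[t c] *: (E c * chi_factor alpha c b)
  else 0)) => [|s _]; last first.
  rewrite mulrA (lagrange_mul_cofactor t_inj node_poly_Y).
  by case: (s ord_max =P c) => [->|_]; rewrite ?eqxx ?mul0r // -scalerAl.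
rewrite -big_mkcond sum_perm_at /= -scaler_nat scalerA => /eqP.
rewrite scaler_eq0 mulf_eq0 (negPf fact_pred_neq0).
rewrite (negPf (horner_lagrange_cofactor_neq0 t_inj c)) /=.
by rewrite /chi_factor mulrBr subr_eq0 mulr_natr => /eqP->; case: eqP.
Qed.

Lemma alpha_lagrange b : alpha b = E b.
Proof.
have [_ E_sum] := lagrange_idempotents t_inj node_poly_Y.
rewrite -[alpha b]mul1r -E_sum mulr_suml (bigD1 b) //= lagrange_mul_alpha eqxx.
by rewrite big1 ?addr0 // => c cb; rewrite lagrange_mul_alpha (negPf cb).
Qed.

Lemma chi_sum_idempotentsS : complete_orthogonal_idempotents alpha.
Proof.
have [E_orth E_sum] := lagrange_idempotents t_inj node_poly_Y.
split=> [a c|]; first by rewrite !alpha_lagrange E_orth.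
by rewrite -E_sum; apply: eq_bigr => a _; rewrite alpha_lagrange.
Qed.

End Converse.

Lemma chi_sum_idempotents (k : fieldType) (R : algType k) (d : nat)
    (alpha : 'I_d -> R) (t : 'I_d -> k) :
    injective t -> d`!%:R != 0 :> k ->
    (forall f : 'I_d -> 'I_d,
       \sum_(s : 'S_d) \prod_(j < d) chi_factor alpha (s j) (f j) = 0) ->
  complete_orthogonal_idempotents alpha.
Proof.
case: d alpha t => [|d'] alpha t t_inj fact_neq0 chi_sum_eq0.
  have := chi_sum_eq0 id; rewrite (eq_bigr (fun _ => 1)) => [|s _]; last first.
    by rewrite big_ord0.
  by rewrite sumr_const card_Sn => /eqP; rewrite oner_eq0.
exact: chi_sum_idempotentsS t_inj fact_neq0 chi_sum_eq0.
Qed.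

Lemma nc_eq0_chi_sum (k : fieldType) (d n : nat) (alpha : 'I_d -> 'M[k]_n) :
    nc_eq0 (chi_T alpha) ->
  forall f : 'I_d -> 'I_d,
    \sum_(s : 'S_d) \prod_(j < d) chi_factor alpha (s j) (f j) = 0.
Proof.
move=> chi0 f; have := chi0 [seq f j | j <- enum 'I_d].
rewrite nc_coef_chi_T size_map size_enum_ord eqxx -[X in zip X _]map_id zip_map.
by under eq_bigr => s _ do rewrite big_map enumT.
Qed.

Section LargeCharacteristic.
Variables (k : fieldType) (d : nat).
Hypothesis pchar_gt : forall p, p \in [pchar k] -> (d < p)%N.

Lemma natr_neq0_le m : (0 < m <= d)%N -> m%:R != 0 :> k.
Proof.
case/andP=> m_gt0 m_le_d; apply/negP => m0.
have [p pcharp] := natf0_pchar m_gt0 m0.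
have p_dvd_m : (p %| m)%N by rewrite (dvdn_pcharf pcharp).
by have := pchar_gt pcharp; rewrite ltnNge (leq_trans (dvdn_leq m_gt0 p_dvd_m)).
Qed.

Lemma fact_natr_neq0 : d`!%:R != 0 :> k.
Proof.
suff: forall m, (m <= d)%N -> m`!%:R != 0 :> k by apply.
elim=> [|m IH] m_le_d; first by rewrite fact0 oner_neq0.
rewrite factS natrM; apply: mulf_neq0; first exact: natr_neq0_le.
exact/IH/ltnW.
Qed.

Lemma natr_ord_inj : injective (fun i : 'I_d => i%:R : k).
Proof.
have natr_lt_neq (i j : 'I_d) : (i < j)%N -> i%:R != j%:R :> k.
  move=> ij; rewrite eq_sym -subr_eq0 -natrB ?(ltnW ij) // natr_neq0_le //.
  by rewrite subn_gt0 ij (leq_trans (leq_subr _ _) (ltnW (ltn_ord j))).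
move=> i j /= eq_ij; apply: val_inj; case: (ltngtP i j) => // [ij|ji].
  by move: (natr_lt_neq _ _ ij); rewrite eq_ij eqxx.
by move: (natr_lt_neq _ _ ji); rewrite eq_ij eqxx.
Qed.

End LargeCharacteristic.

Section StandardBasis.
Variables (k : fieldType) (d : nat).
Local Notation A := {ffun 'I_d -> k^o}.

Lemma ffunMrE (a b : A) i : (a * b) i = a i * b i.
Proof. by rewrite /GRing.mul /= ffunE. Qed.

Lemma std_e_mul (i j : 'I_d) : std_e k i * std_e k j = if i == j then std_e k i else 0.
Proof.
apply/ffunP => x; rewrite ffunMrE !ffunE; case: (i =P j) => [<-|/eqP ij].
  by rewrite ffunE -natrM mulnb andbb.
rewrite /GRing.zero /= ffunE -natrM mulnb.
by case: (i =P x) => // <-; rewrite eq_sym (negPf ij).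
Qed.

Lemma sum_std_e : \sum_(i < d) std_e k i = 1.
Proof.
apply/ffunP => x; rewrite sum_ffunE (bigD1 x) //= ffunE eqxx big1 ?addr0.
  by rewrite /GRing.one /= ffunE.
by move=> i xi; rewrite ffunE (negPf xi).
Qed.

Lemma std_e_decomp (a : A) : a = \sum_(i < d) a i *: std_e k i.
Proof.
apply/ffunP => x; rewrite sum_ffunE (bigD1 x) //= !ffunE eqxx big1 ?addr0.
  by rewrite [RHS]mulr1.
by move=> i xi; rewrite !ffunE (negPf xi) [LHS]mulr0.
Qed.

Lemma linear_std_e_idempotents (R : algType k) (phi : {linear A -> R}) :
  (phi 1 = 1 /\ forall a b, phi (a * b) = phi a * phi b) <->
  complete_orthogonal_idempotents (fun i => phi (std_e k i)).
Proof.
split=> [[phi1 phiM] | [e_orth e_sum]].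
  split=> [i j|]; last by rewrite -linear_sum sum_std_e.
  by rewrite -phiM std_e_mul; case: eqP; rewrite ?linear0.
split=> [|a b]; first by rewrite -sum_std_e linear_sum.
rewrite [in LHS](std_e_decomp (a * b)) [in RHS](std_e_decomp a).
rewrite [in RHS](std_e_decomp b) !linear_sum mulr_suml; apply: eq_bigr => i _.
rewrite mulr_sumr (bigD1 i) //= big1 => [|j ji].
  by rewrite !linearZ /= -scalerAl -scalerAr e_orth eqxx scalerA ffunMrE addr0.
by rewrite !linearZ /= -scalerAl -scalerAr e_orth eq_sym (negPf ji) !scaler0.
Qed.

End StandardBasis.

Theorem theoremB (k : fieldType) (d n : nat)
  (Hchar : [pchar k] =i pred0 \/ (forall p : nat, p \in [pchar k] -> (d < p)%N))
  (phi : {linear {ffun 'I_d -> k^o} -> 'M[k]_n}) :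
  (phi 1 = 1%:M /\ (forall a b : {ffun 'I_d -> k^o}, phi (a * b) = phi a *m phi b))
  <-> nc_eq0 (chi_T (fun i : 'I_d => phi (std_e k i))).
Proof.
have pchar_gt p : p \in [pchar k] -> (d < p)%N.
  by case: Hchar => [char0 | pchar_gt]; [rewrite char0 | apply: pchar_gt].
case: n phi => [|n] phi.
  by split=> [_ w | _]; last split=> [|a b]; rewrite [LHS]flatmx0 ?[RHS]flatmx0.
apply: iff_trans (linear_std_e_idempotents phi) _.
split=> [|/nc_eq0_chi_sum]; first exact: chi_T_idempotents_eq0.
exact: chi_sum_idempotents (natr_ord_inj pchar_gt) (fact_natr_neq0 pchar_gt).
Qed.
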